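(* There is an equivalence of categories $\mathbf{Poly}_{\ulcorner}\simeq\mathbf{Dir}_{\ulcorner}$ between the category of polynomial functors with cartesian natural transformations and the category of Dirichlet functors with cartesian natural transformations. This equivalence sends each representable $(-)^N$ to the contravariant representable $N^{(-)}$.
   Context: A polynomial functor is a functor $\mathbf{Set}\to\mathbf{Set}$ of the form $X\mapsto\sum_{b\in B}X^{E_b}$ (a sum of covariant representables). A Dirichlet functor is a functor $D:\mathbf{Set}^{op}\to\mathbf{Set}$ preserving connected limits (equivalently, of the form $X\mapsto\sum_{b\in B}E_b^X$). A natural transformation is cartesian if all its naturality squares are pullbacks. $\mathbf{Poly}_{\ulcorner}$ (resp. $\mathbf{Dir}_{\ulcorner}$) has polynomial (resp. Dirichlet) functors as objects and cartesian natural transformations as morphisms. *)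

From Stdlib Require Import Logic.FunctionalExtensionality.

(* The universe of "sets": a single fixed universe, used both for the
   argument sets X and for the summand data B, E_b. *)
Definition U := Type.

Record PolyObj : Type := { pB : U ; pE : pB -> U }.

Definition polyF (p : PolyObj) (X : U) : U := { b : pB p & pE p b -> X }.

Definition polyMap (p : PolyObj) {X Y : U} (f : X -> Y) (x : polyF p X)
  : polyF p Y := existT _ (projT1 x) (fun e => f (projT2 x e)).

(* Cartesian natural transformations between polynomial functors:
   naturality, and every naturality square is a pullback in Set. *)
Record PolyHom (p q : PolyObj) : Type := {
  pcomp : forall X : U, polyF p X -> polyF q X ;
  pnat : forall (X Y : U) (f : X -> Y) (x : polyF p X),
      pcomp Y (polyMap p f x) = polyMap q f (pcomp X x) ;
  pcart : forall (X Y : U) (f : X -> Y) (q0 : polyF q X) (p1 : polyF p Y),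
      polyMap q f q0 = pcomp Y p1 ->
      exists! p0 : polyF p X, pcomp X p0 = q0 /\ polyMap p f p0 = p1 }.
Arguments pcomp {p q} _ _ _.

Definition poly_heq {p q} (a b : PolyHom p q) : Prop :=
  forall (X : U) (x : polyF p X), pcomp a X x = pcomp b X x.

Definition poly_id (p : PolyObj) : PolyHom p p.
Proof.
  refine {| pcomp := fun X x => x |}.
  - reflexivity.
  - intros X Y f q0 p1 H. exists q0. split; [split; auto|].
    intros y [Hy _]; auto.
Defined.

Definition poly_comp {p q r} (b : PolyHom q r) (a : PolyHom p q) : PolyHom p r.
Proof.
  refine {| pcomp := fun X x => pcomp b X (pcomp a X x) |}.
  - intros X Y f x. rewrite (pnat _ _ a), (pnat _ _ b). reflexivity.
  - intros X Y f r0 p1 H.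
    destruct (pcart _ _ b X Y f r0 (pcomp a Y p1) H) as [m [[Hm1 Hm2] Hmu]].
    destruct (pcart _ _ a X Y f m p1 Hm2) as [p0 [[Hp1 Hp2] Hpu]].
    exists p0. split; [split; [rewrite Hp1; exact Hm1 | exact Hp2]|].
    intros p0' [H1 H2]. apply Hpu. split; auto.
    symmetry. apply Hmu. split; auto. rewrite <- (pnat _ _ a), H2. reflexivity.
Defined.

Record DirObj : Type := { dB : U ; dE : dB -> U }.

Definition dirF (d : DirObj) (X : U) : U := { b : dB d & X -> dE d b }.

Definition dirMap (d : DirObj) {X Y : U} (f : X -> Y) (y : dirF d Y)
  : dirF d X := existT _ (projT1 y) (fun x => projT2 y (f x)).

Record DirHom (d d' : DirObj) : Type := {
  dcomp : forall X : U, dirF d X -> dirF d' X ;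
  dnat : forall (X Y : U) (f : X -> Y) (y : dirF d Y),
      dcomp X (dirMap d f y) = dirMap d' f (dcomp Y y) ;
  dcart : forall (X Y : U) (f : X -> Y) (q : dirF d' Y) (p : dirF d X),
      dirMap d' f q = dcomp X p ->
      exists! p' : dirF d Y, dcomp Y p' = q /\ dirMap d f p' = p }.
Arguments dcomp {d d'} _ _ _.

Definition dir_heq {d d'} (a b : DirHom d d') : Prop :=
  forall (X : U) (x : dirF d X), dcomp a X x = dcomp b X x.

Definition dir_id (d : DirObj) : DirHom d d.
Proof.
  refine {| dcomp := fun X x => x |}.
  - reflexivity.
  - intros X Y f q p H. exists q. split; [split; auto|].
    intros y [Hy _]; auto.
Defined.

Definition dir_comp {d e g} (b : DirHom e g) (a : DirHom d e) : DirHom d g.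
Proof.
  refine {| dcomp := fun X x => dcomp b X (dcomp a X x) |}.
  - intros X Y f y. rewrite (dnat _ _ a), (dnat _ _ b). reflexivity.
  - intros X Y f r p H.
    destruct (dcart _ _ b X Y f r (dcomp a X p) H) as [m [[Hm1 Hm2] Hmu]].
    destruct (dcart _ _ a X Y f m p Hm2) as [p' [[Hp1 Hp2] Hpu]].
    exists p'. split; [split; [rewrite Hp1; exact Hm1 | exact Hp2]|].
    intros p'' [H1 H2]. apply Hpu. split; auto.
    symmetry. apply Hmu. split; auto. rewrite <- (dnat _ _ a), H2. reflexivity.
Defined.

Definition dir_iso (d d' : DirObj) : Prop :=
  exists (a : DirHom d d') (b : DirHom d' d),
    dir_heq (dir_comp b a) (dir_id d) /\ dir_heq (dir_comp a b) (dir_id d').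

Record PolyDirFunctor : Type := {
  Fob : PolyObj -> DirObj ;
  Fhom : forall p q, PolyHom p q -> DirHom (Fob p) (Fob q) ;
  Fresp : forall p q (a b : PolyHom p q),
      poly_heq a b -> dir_heq (Fhom p q a) (Fhom p q b) ;
  Fid : forall p, dir_heq (Fhom p p (poly_id p)) (dir_id (Fob p)) ;
  Fcomp : forall p q r (a : PolyHom p q) (b : PolyHom q r),
      dir_heq (Fhom p r (poly_comp b a))
              (dir_comp (Fhom q r b) (Fhom p q a)) }.

Definition is_equivalence (F : PolyDirFunctor) : Prop :=
  (forall p q (a b : PolyHom p q),
      dir_heq (Fhom F p q a) (Fhom F p q b) -> poly_heq a b) /\
  (forall p q (g : DirHom (Fob F p) (Fob F q)),
      exists a : PolyHom p q, dir_heq (Fhom F p q a) g) /\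
  (forall d : DirObj, exists p : PolyObj, dir_iso (Fob F p) d).

Definition poly_rep (N : U) : PolyObj := {| pB := unit ; pE := fun _ => N |}.
Definition dir_rep (N : U) : DirObj := {| dB := unit ; dE := fun _ => N |}.

(** By the Yoneda lemma a natural transformation [a : p => q] of polynomial
    functors is determined by its values on the generic elements
    [(b, id) : p (E_b)], i.e. by a map [f] on positions together with maps
    [E_q (f b) -> E_p b]; cartesianness at these elements makes the maps
    bijections.  Dually, a cartesian transformation of Dirichlet functors is a
    map [g] on positions with bijections [E_b -> E'_(g b)].  Keeping the
    positions and directions of an object and inverting the bijections of a
    morphism is therefore an equivalence, which is the identity on objects and
    so sends [X^N] to [N^X]. *)

(* Before [Defs], so that its [pcomp] shadows ssrfun's partial composition. *)
From Corelib Require Import ssreflect ssrfun.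
From Pilot Require Import Defs.
From Stdlib Require Import FunctionalExtensionality ClassicalEpsilon Eqdep.

Set Implicit Arguments.

Ltac sigT_inj H :=
  first [ apply inj_pair2 in H
        | let E := fresh "E" in
          have E := f_equal (@projT1 _ _) H; simpl in E; subst;
          apply inj_pair2 in H ].

Section Inverse.

Variables (A B : Type) (f : A -> B).
Hypothesis fB : bijective f.

Definition bij_inv : B -> A :=
  proj1_sig (constructive_indefinite_description
               (fun g => cancel f g /\ cancel g f)
               (let: @Bijective _ _ _ g fK gK := fB in ex_intro _ g (conj fK gK))).

Lemma bij_invK : cancel f bij_inv.
Proof. by rewrite /bij_inv; case: constructive_indefinite_description => g []. Qed.

Lemma bij_invKV : cancel bij_inv f.
Proof. by rewrite /bij_inv; case: constructive_indefinite_description => g []. Qed.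

Lemma bij_inv_bij : bijective bij_inv.
Proof. exact: Bijective bij_invKV bij_invK. Qed.

End Inverse.

Lemma existT_inverseE {C E : Type} {F : C -> Type} {c1 c2 : C}
    (s1 : F c1 -> E) (s2 : F c2 -> E) (i1 : E -> F c1) (i2 : E -> F c2) :
  cancel s1 i1 -> cancel i1 s1 -> cancel s2 i2 -> cancel i2 s2 ->
  existT (fun c => F c -> E) c1 s1 = existT _ c2 s2 <->
  existT (fun c => E -> F c) c1 i1 = existT _ c2 i2.
Proof.
move=> s1K i1K s2K i2K; split=> eq12; sigT_inj eq12; subst; congr existT;
  apply: functional_extensionality.
- exact: (bij_can_eq (Bijective s1K i1K) s1K s2K).
- exact: (bij_can_eq (Bijective i1K s1K) i1K i2K).
Qed.

Section PolyCartesian.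

Variables p q : PolyObj.
Implicit Types a : PolyHom p q.

Definition poly_gen (b : pB p) : polyF p (pE p b) := existT _ b id.

Definition ppos a b : pB q := projT1 (pcomp a _ (poly_gen b)).
Definition pdir a b : pE q (ppos a b) -> pE p b := projT2 (pcomp a _ (poly_gen b)).

Lemma pcomp_gen a b : pcomp a _ (poly_gen b) = existT _ (ppos a b) (pdir a b).
Proof. exact: sigT_eta. Qed.

Lemma pcompE a X b (h : pE p b -> X) :
  pcomp a X (existT _ b h) = existT _ (ppos a b) (fun e => h (pdir a b e)).
Proof. by rewrite -[existT _ b h]/(polyMap p h (poly_gen b)) pnat pcomp_gen. Qed.

Lemma poly_heqP a a' :
  poly_heq a a' <-> forall b, pcomp a _ (poly_gen b) = pcomp a' _ (poly_gen b).
Proof.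
split=> [eq_aa' b | eq_aa' X [b h]]; first exact: eq_aa'.
by rewrite -[existT _ b h]/(polyMap p h (poly_gen b)) !pnat eq_aa'.
Qed.

Lemma pdir_bij a b : bijective (pdir a b).
Proof.
have [|[b0 k] [[comp_k map_k] _]] :=
  pcart _ _ a _ _ (pdir a b) (existT _ (ppos a b) id) (poly_gen b).
  by rewrite pcomp_gen.
rewrite /polyMap /poly_gen /= in map_k; sigT_inj map_k.
rewrite pcompE in comp_k; sigT_inj comp_k.
by exists k => e; [have := f_equal (fun g => g e) comp_k
                  | have := f_equal (fun g => g e) map_k].
Qed.

Section PolyHomOf.

Variables (f : pB p -> pB q) (s : forall b, pE q (f b) -> pE p b).
Hypothesis s_bij : forall b, bijective (s b).

Definition poly_of_comp X (x : polyF p X) : polyF q X :=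
  existT _ (f (projT1 x)) (fun e => projT2 x (s _ e)).

Lemma poly_of_comp_cart X Y (g : X -> Y) (y : polyF q X) (x : polyF p Y) :
  polyMap q g y = poly_of_comp x ->
  exists! x0 : polyF p X, poly_of_comp x0 = y /\ polyMap p g x0 = x.
Proof.
case: y x => [b' k] [b h] eq_yx; rewrite /polyMap /= in eq_yx; sigT_inj eq_yx.
have [r sK rK] := s_bij b.
exists (existT _ b (fun e => k (r e))); split; first split.
- rewrite /poly_of_comp /=; congr existT; apply: functional_extensionality => e.
  by rewrite sK.
- rewrite /polyMap /=; congr existT; apply: functional_extensionality => e.
  by rewrite (f_equal (fun u => u (r e)) eq_yx) /= rK.
- case=> b2 k2 [eq_comp eq_map]; rewrite /polyMap /= in eq_map; sigT_inj eq_map.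
  rewrite /poly_of_comp /= in eq_comp; sigT_inj eq_comp.
  congr existT; apply: functional_extensionality => e.
  by rewrite -eq_comp rK.
Qed.

Definition poly_hom_of : PolyHom p q :=
  {| pcomp := poly_of_comp ; pnat := fun _ _ _ _ => erefl ;
     pcart := poly_of_comp_cart |}.

End PolyHomOf.

End PolyCartesian.

Arguments poly_gen {p} b.
Arguments poly_hom_of {p q} f s s_bij.

Section DirCartesian.

Variables d d' : DirObj.
Implicit Types a : DirHom d d'.

Definition dir_gen (b : dB d) : dirF d (dE d b) := existT _ b id.

Definition dpos a b : dB d' := projT1 (dcomp a _ (dir_gen b)).
Definition ddir a b : dE d b -> dE d' (dpos a b) := projT2 (dcomp a _ (dir_gen b)).

Lemma dcomp_gen a b : dcomp a _ (dir_gen b) = existT _ (dpos a b) (ddir a b).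
Proof. exact: sigT_eta. Qed.

Lemma dcompE a X b (h : X -> dE d b) :
  dcomp a X (existT _ b h) = existT _ (dpos a b) (fun x => ddir a b (h x)).
Proof. by rewrite -[existT _ b h]/(dirMap d h (dir_gen b)) dnat dcomp_gen. Qed.

Lemma dir_heqP a a' :
  dir_heq a a' <-> forall b, dcomp a _ (dir_gen b) = dcomp a' _ (dir_gen b).
Proof.
split=> [eq_aa' b | eq_aa' X [b h]]; first exact: eq_aa'.
by rewrite -[existT _ b h]/(dirMap d h (dir_gen b)) !dnat eq_aa'.
Qed.

Lemma ddir_bij a b : bijective (ddir a b).
Proof.
have [|[b0 k] [[comp_k map_k] _]] :=
  dcart _ _ a _ _ (ddir a b) (existT _ (dpos a b) id) (dir_gen b).
  by rewrite dcomp_gen.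
rewrite /dirMap /dir_gen /= in map_k; sigT_inj map_k.
rewrite dcompE in comp_k; sigT_inj comp_k.
by exists k => e; [have := f_equal (fun g => g e) map_k
                  | have := f_equal (fun g => g e) comp_k].
Qed.

Section DirHomOf.

Variables (g : dB d -> dB d') (t : forall b, dE d b -> dE d' (g b)).
Hypothesis t_bij : forall b, bijective (t b).

Definition dir_of_comp X (x : dirF d X) : dirF d' X :=
  existT _ (g (projT1 x)) (fun e => t _ (projT2 x e)).

Lemma dir_of_comp_cart X Y (f : X -> Y) (y : dirF d' Y) (x : dirF d X) :
  dirMap d' f y = dir_of_comp x ->
  exists! y0 : dirF d Y, dir_of_comp y0 = y /\ dirMap d f y0 = x.
Proof.
case: y x => [b' k] [b h] eq_yx; rewrite /dirMap /= in eq_yx; sigT_inj eq_yx.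
have [r tK rK] := t_bij b.
exists (existT _ b (fun y => r (k y))); split; first split.
- rewrite /dir_of_comp /=; congr existT; apply: functional_extensionality => y.
  by rewrite rK.
- rewrite /dirMap /=; congr existT; apply: functional_extensionality => x.
  by rewrite (f_equal (fun u => u x) eq_yx) /= tK.
- case=> b2 k2 [eq_comp eq_map]; rewrite /dirMap /= in eq_map; sigT_inj eq_map.
  rewrite /dir_of_comp /= in eq_comp; sigT_inj eq_comp.
  congr existT; apply: functional_extensionality => y.
  by rewrite -eq_comp tK.
Qed.

Definition dir_hom_of : DirHom d d' :=
  {| dcomp := dir_of_comp ; dnat := fun _ _ _ _ => erefl ;
     dcart := dir_of_comp_cart |}.

End DirHomOf.

End DirCartesian.

Arguments dir_gen {d} b.
Arguments dir_hom_of {d d'} g t t_bij.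

Definition dir_of_poly (p : PolyObj) : DirObj := {| dB := pB p ; dE := pE p |}.

Section DirOfPoly.

Variables p q : PolyObj.
Implicit Types a : PolyHom p q.

Definition dir_of_poly_hom a : DirHom (dir_of_poly p) (dir_of_poly q) :=
  @dir_hom_of (dir_of_poly p) (dir_of_poly q) (ppos a)
    (fun b => bij_inv (pdir_bij a b)) (fun b => bij_inv_bij (pdir_bij a b)).

Lemma dir_of_poly_hom_gen a b :
  dcomp (dir_of_poly_hom a) _ (dir_gen b) = existT _ (ppos a b) (bij_inv (pdir_bij a b)).
Proof. by []. Qed.

Lemma dir_of_poly_hom_heqE a a' :
  dir_heq (dir_of_poly_hom a) (dir_of_poly_hom a') <-> poly_heq a a'.
Proof.
rewrite dir_heqP poly_heqP; split=> eq_aa' b; have := eq_aa' b;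
  rewrite !dir_of_poly_hom_gen !pcomp_gen; [apply: iffRL | apply: iffLR];
  exact: existT_inverseE (bij_invK _) (bij_invKV _) (bij_invK _) (bij_invKV _).
Qed.

End DirOfPoly.

Lemma dir_of_poly_hom_id p :
  dir_heq (dir_of_poly_hom (poly_id p)) (dir_id (dir_of_poly p)).
Proof.
apply/dir_heqP => b; rewrite dir_of_poly_hom_gen; congr existT.
apply: functional_extensionality; exact: bij_invK.
Qed.

Lemma dir_of_poly_hom_comp p q r (a : PolyHom p q) (a' : PolyHom q r) :
  dir_heq (dir_of_poly_hom (poly_comp a' a))
          (dir_comp (dir_of_poly_hom a') (dir_of_poly_hom a)).
Proof.
apply/dir_heqP => b; rewrite dir_of_poly_hom_gen.
have gen_comp : pcomp (poly_comp a' a) _ (poly_gen b)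
  = existT _ (ppos a' (ppos a b)) (fun e => pdir a b (pdir a' (ppos a b) e)).
  by rewrite /= pcomp_gen pcompE.
rewrite pcomp_gen in gen_comp.
exact: (existT_inverseE (bij_invK _) (bij_invKV _)
          (can_comp (bij_invK _) (bij_invK _))
          (can_comp (bij_invKV _) (bij_invKV _))).1 gen_comp.
Qed.

Definition poly_to_dir : PolyDirFunctor :=
  {| Fob := dir_of_poly ;
     Fhom := @dir_of_poly_hom ;
     Fresp := fun p q a a' => iffRL (dir_of_poly_hom_heqE a a') ;
     Fid := dir_of_poly_hom_id ;
     Fcomp := dir_of_poly_hom_comp |}.

Lemma dir_of_poly_hom_full p q (g : DirHom (dir_of_poly p) (dir_of_poly q)) :
  exists a : PolyHom p q, dir_heq (dir_of_poly_hom a) g.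
Proof.
exists (poly_hom_of (dpos g) (fun b => bij_inv (ddir_bij g b))
                    (fun b => bij_inv_bij (ddir_bij g b))).
apply/dir_heqP => b; rewrite dir_of_poly_hom_gen dcomp_gen; congr existT.
apply: functional_extensionality => x.
(* The [pdir] of [poly_hom_of f s _] is [s], by computation. *)
rewrite -{1}[x](bij_invK (ddir_bij g b)); exact: (bij_invK (pdir_bij _ b)).
Qed.

Lemma dir_iso_refl d : dir_iso d d.
Proof. by exists (dir_id d), (dir_id d). Qed.

Theorem theorem3p2 :
  exists F : PolyDirFunctor,
    is_equivalence F /\
    forall N : U, dir_iso (Fob F (poly_rep N)) (dir_rep N).
Proof.
exists poly_to_dir; split; last by move=> N; apply: dir_iso_refl.
split; [|split].
- by move=> p q a a' /dir_of_poly_hom_heqE.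
- exact: dir_of_poly_hom_full.
- by case=> B E; exists {| pB := B ; pE := E |}; apply: dir_iso_refl.
Qed.
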